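(* Let $G$ and $H$ be finite directed graphs without sinks or sources, each having a unique terminal component, $C$ and $C'$ respectively. If $\chi : X_G \to X_H$ is a conjugacy, then $\chi(X_C) = X_{C'}$.
   Context: For a finite directed graph $H$: a vertex is recurrent if there is a path from it to itself; recurrent vertices $v,w$ are equivalent if there are paths from $v$ to $w$ and from $w$ to $v$; the equivalence classes are the components. A component $C$ is terminal if there is no path from a vertex of $C$ to a vertex of another component. $X_H$ is the edge shift of $H$ and $X_C$ the edge shift of the subgraph with vertex set $C$ and all edges of $H$ with both endpoints in $C$. A conjugacy is a shift-commuting homeomorphism. *)

From mathcomp Require Import all_boot.
From Stdlib Require Import ZArith.
Set Implicit Arguments. Unset Strict Implicit. Unset Printing Implicit Defensive.

(* A finite directed graph (multi-edges allowed): vertex type V, edge type E,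
   source and target maps s t : E -> V. *)
Section Graph.
Variables (V E : finType) (s t : E -> V).

Definition adj : rel V := fun v w => [exists e : E, (s e == v) && (t e == w)].

Definition reach (v w : V) : bool := connect adj v w.

Definition recurrent (v : V) : bool :=
  [exists e : E, (s e == v) && reach (t e) v].

Definition is_component (C : {set V}) : Prop :=
  exists v, recurrent v /\
    C = [set w | recurrent w && reach v w && reach w v].

Definition is_terminal (C : {set V}) : Prop :=
  is_component C /\
  forall D : {set V}, is_component D -> D <> C ->
    forall v w, v \in C -> w \in D -> ~~ reach v w.

Definition no_sink_source : Prop :=
  forall v : V, (exists e, s e = v) /\ (exists e, t e = v).

(* the edge shift of the subgraph with vertex set C (all edges with both
   endpoints in C): bi-infinite sequences of such edges, consecutive. *)
Definition in_edge_shift_on (C : {set V}) (x : Z -> E) : Prop :=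
  forall i : Z, s (x i) \in C /\ t (x i) \in C /\ t (x i) = s (x (i + 1)%Z).

Definition in_edge_shift (x : Z -> E) : Prop :=
  forall i : Z, t (x i) = s (x (i + 1)%Z).
End Graph.

Definition shift (A : Type) (x : Z -> A) : Z -> A := fun i => x (i + 1)%Z.

(* continuity of f on the subspace X of A^Z (product topology of discrete
   alphabets), written out via the cylinder-set basis *)
Definition cont_on (A B : Type) (X : (Z -> A) -> Prop)
    (f : (Z -> A) -> (Z -> B)) : Prop :=
  forall x, X x -> forall n : nat, exists m : nat, forall y, X y ->
    (forall i : Z, (Z.abs i <= Z.of_nat m)%Z -> y i = x i) ->
    forall i : Z, (Z.abs i <= Z.of_nat n)%Z -> f y i = f x i.

Definition conjugacy (A B : Type) (X : (Z -> A) -> Prop) (Y : (Z -> B) -> Prop)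
    (f : (Z -> A) -> (Z -> B)) : Prop :=
  (forall x, X x -> Y (f x)) /\
  (exists g : (Z -> B) -> (Z -> A),
     (forall y, Y y -> X (g y)) /\
     (forall x, X x -> g (f x) = x) /\
     (forall y, Y y -> f (g y) = y) /\
     cont_on X f /\ cont_on Y g) /\
  (forall x, X x -> f (shift x) = shift (f x)).

(** Every vertex of G reaches the unique terminal component C, so any point
    of X_G can be followed, after a finite connecting path, by the right half
    of any point of X_C.  Given x in X_C and a coordinate i, pick z in X_H whose
    0-th edge starts in C' and let w be its preimage.  Splicing the far left of
    w to the far right of x gives a point p with chi(p)_0 = z_0 and, by
    continuity and shift-commutation, chi(p)_(i+d) = chi(x)_i for some d >= -i.
    Hence the source of chi(x)_i is reachable from C', and lies in C' since C'
    is terminal.  The reverse inclusion is the same argument for chi^-1. *)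

From Pilot Require Import Defs.
From Stdlib Require Import ZArith Lia.
From mathcomp Require Import all_boot.
Set Implicit Arguments. Unset Strict Implicit. Unset Printing Implicit Defensive.

Definition splice (A : Type) (a d : Z) (w x : Z -> A) : Z -> A :=
  fun k => if (k <=? a)%Z then w k else x (k - d)%Z.

Section Graph.
Variables (V E : finType) (s t : E -> V).
Local Notation "u ~> v" := (reach s t u v) (at level 70).

Lemma reach_refl v : v ~> v. Proof. exact: connect0. Qed.

Lemma reach_trans u v w : u ~> v -> v ~> w -> u ~> w.
Proof. exact: connect_trans. Qed.

Lemma reach_edge e : s e ~> t e.
Proof. by apply: connect1; apply/existsP; exists e; rewrite !eqxx. Qed.

Definition component_of u : {set V} :=
  [set w | recurrent s t w && (u ~> w) && (w ~> u)].

Lemma component_of_reach u v w :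
  v \in component_of u -> w \in component_of u -> v ~> w.
Proof.
rewrite !inE => /andP[_ vu] /andP[/andP[_ uw] _]; exact: reach_trans vu uw.
Qed.

Lemma component_of_eq u v : u ~> v -> v ~> u -> component_of u = component_of v.
Proof.
move=> uv vu; apply/setP => w; rewrite !inE; case: (recurrent s t w) => //=.
apply/andP/andP => [[uw wu]|[vw wv]]; split.
- exact: reach_trans vu uw.
- exact: reach_trans wu uv.
- exact: reach_trans uv vw.
- exact: reach_trans wv vu.
Qed.

Definition bottom u := forall w, u ~> w -> w ~> u.

Lemma reach_bottom a : exists2 u, a ~> u & bottom u.
Proof.
pose succ u := [set w | u ~> w].
have [u au min_u] := arg_minnP (fun u => #|succ u|) (reach_refl a).
exists u => // w uw.
have sub : succ w \subset succ u.
  by apply/subsetP => v; rewrite !inE; exact: reach_trans uw.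
have/eqP eq_succ : succ w == succ u.
  by rewrite eqEcard sub min_u //; exact: reach_trans au uw.
have : u \in succ w by rewrite eq_succ inE reach_refl.
by rewrite inE.
Qed.

Definition linked (x : Z -> E) (k : Z) := t (x k) = s (x (k + 1)%Z).

Lemma in_edge_shift_onP C x :
  in_edge_shift_on s t C x <-> in_edge_shift s t x /\ forall i, s (x i) \in C.
Proof.
split=> [hx | [hx xC] i]; first by split=> i; case: (hx i) => [? [? ?]].
by rewrite hx; split; [|split].
Qed.

Lemma in_edge_shift_reach x j k :
  in_edge_shift s t x -> (j <= k)%Z -> s (x j) ~> s (x k).
Proof.
move=> hx jk; have [n ->] : exists n, k = (j + Z.of_nat n)%Z.
  by exists (Z.to_nat (k - j)); lia.
elim: n => [|n IH]; first by rewrite Z.add_0_r reach_refl.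
apply: reach_trans IH _.
have -> : (j + Z.of_nat n.+1 = j + Z.of_nat n + 1)%Z by lia.
rewrite -hx; exact: reach_edge.
Qed.

Lemma linked_splice a d w x k :
  ((k < a)%Z -> linked w k) -> ((a < k)%Z -> linked x (k - d)) ->
  (k = a -> t (w a) = s (x (a + 1 - d)%Z)) -> linked (splice a d w x) k.
Proof.
rewrite /linked /splice => hw hx ha.
case: (Z.leb_spec k a) => ka; case: (Z.leb_spec (k + 1) a) => k1a; try lia.
- by apply: hw; lia.
- have ek : k = a by lia.
  by rewrite ek ha.
- by rewrite hx; [congr (s (x _)) | ]; lia.
Qed.

Lemma splice_path x b :
  (forall k, (b <= k)%Z -> linked x k) ->
  forall q w a, (forall k, (k < a)%Z -> linked w k) ->
  path (adj s t) (t (w a)) q -> last (t (w a)) q = s (x b) ->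
  exists p d, [/\ in_edge_shift s t p, forall k, (k <= a)%Z -> p k = w k,
    forall k, (b <= k)%Z -> p (k + d)%Z = x k & (a + 1 - b <= d)%Z].
Proof.
move=> hx; elim=> [|v q IH] w a hw /=.
  move=> _ wx; exists (splice a (a + 1 - b) w x), (a + 1 - b)%Z; split.
  - move=> k; apply: linked_splice => [/hw // | ak | _]; first by apply: hx; lia.
    by rewrite wx; congr (s (x _)); lia.
  - by move=> k ka; rewrite /splice (proj2 (Z.leb_le _ _) ka).
  - move=> k bk; rewrite /splice (proj2 (Z.leb_gt _ _)); [congr x | ]; lia.
  - lia.
move=> /andP[/existsP[e /andP[/eqP se /eqP te]] pq] lq.
pose w' := splice a 0 w (fun=> e).
have w'a1 : w' (a + 1)%Z = e by rewrite /w' /splice (proj2 (Z.leb_gt _ _)) //; lia.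
have hw' k : (k < a + 1)%Z -> linked w' k.
  move=> ka; apply: linked_splice => [/hw // | ? | _]; [lia | by rewrite se].
have := IH w' (a + 1)%Z hw'; rewrite w'a1 te => /(_ pq lq) [p [d [hp pw px hd]]].
exists p, d; split=> //; last lia.
by move=> k ka; rewrite pw /w' /splice ?(proj2 (Z.leb_le _ _) ka) //; lia.
Qed.

Hypothesis ns : no_sink_source s t.

Lemma bottom_recurrent u : bottom u -> recurrent s t u.
Proof.
move=> bu; have [[e se] _] := ns u.
apply/existsP; exists e; rewrite se eqxx /=; apply: bu.
rewrite -se; exact: reach_edge.
Qed.

Lemma bottom_component_terminal u : bottom u -> is_terminal s t (component_of u).
Proof.
move=> bu; split; first by exists u; split; first exact: bottom_recurrent.
move=> D [v [_ ->]] ne x y; rewrite !inE => /andP[/andP[_ ux] _].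
move=> /andP[/andP[_ vy] yv]; apply/negP => xy; apply: ne.
have uy := reach_trans ux xy.
apply: component_of_eq; [exact: reach_trans vy (bu _ uy) | exact: reach_trans uy yv].
Qed.

Lemma terminal_closed C v w : is_terminal s t C -> v \in C -> v ~> w -> w \in C.
Proof.
move=> [[c [_ defC]] term] vC vw.
have cv : c ~> v by move: vC; rewrite defC inE => /andP[/andP[_ ->]].
have back w' : v ~> w' -> w' ~> c.
  move=> vw'; have [u w'u bu] := reach_bottom w'.
  have uC : u \in C.
    case: (eqVneq (component_of u) C) => [<- | /eqP ne].
      by rewrite inE bottom_recurrent // reach_refl.
    have uu : u \in component_of u by rewrite inE bottom_recurrent // reach_refl.
    by have := term _ (bottom_component_terminal bu).1 ne v u vC uu;
      rewrite (reach_trans vw' w'u).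
  by move: uC; rewrite defC inE => /andP[_]; exact: reach_trans w'u.
have bw : bottom w.
  by move=> w' ww'; apply: reach_trans (back _ (reach_trans vw ww')) (reach_trans cv vw).
by rewrite defC inE bottom_recurrent // (reach_trans cv vw) back.
Qed.

Lemma unique_terminal_reach C a b : is_terminal s t C ->
  (forall D, is_terminal s t D -> D = C) -> b \in C -> a ~> b.
Proof.
move=> [[c [_ defC]] _] uniqC bC.
have [u au bu] := reach_bottom a.
have uC : u \in C.
  by rewrite -(uniqC _ (bottom_component_terminal bu)) inE bottom_recurrent // reach_refl.
rewrite defC in uC bC; exact: reach_trans au (component_of_reach uC bC).
Qed.

Lemma in_edge_shift_through e0 : exists2 z, in_edge_shift s t z & z 0%Z = e0.
Proof.
pose next v := odflt e0 [pick e | s e == v].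
pose prev v := odflt e0 [pick e | t e == v].
have s_next v : s (next v) = v.
  rewrite /next; case: pickP => [e /eqP // | none].
  by have [[e se] _] := ns v; move: (none e); rewrite se eqxx.
have t_prev v : t (prev v) = v.
  rewrite /prev; case: pickP => [e /eqP // | none].
  by have [_ [e te]] := ns v; move: (none e); rewrite te eqxx.
pose fix fwd n := if n is n'.+1 then next (t (fwd n')) else e0.
pose fix bwd n := if n is n'.+1 then prev (s (bwd n')) else e0.
exists (fun k => if (0 <=? k)%Z then fwd (Z.to_nat k) else bwd (Z.to_nat (- k))) => // k.
case: (Z.leb_spec 0 k) => hk; case: (Z.leb_spec 0 (k + 1)) => hk1; try lia.
- have -> : Z.to_nat (k + 1) = (Z.to_nat k).+1 by lia.
  by rewrite /= s_next.
- have -> : Z.to_nat (- k) = 1 by lia.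
  have -> : Z.to_nat (k + 1) = 0 by lia.
  by rewrite /= t_prev.
- have -> : Z.to_nat (- k) = (Z.to_nat (- (k + 1))).+1 by lia.
  by rewrite /= t_prev.
Qed.

Lemma splice_into_terminal C w x a b : is_terminal s t C ->
  (forall D, is_terminal s t D -> D = C) ->
  in_edge_shift s t w -> in_edge_shift_on s t C x ->
  exists p d, [/\ in_edge_shift s t p, forall k, (k <= a)%Z -> p k = w k,
    forall k, (b <= k)%Z -> p (k + d)%Z = x k & (a + 1 - b <= d)%Z].
Proof.
move=> tC uC hw /in_edge_shift_onP[hx xC].
have /connectP[q pq lq] := unique_terminal_reach (t (w a)) tC uC (xC b).
exact: splice_path (fun k _ => hx k) q w a (fun k _ => hw k) pq (esym lq).
Qed.

End Graph.

(* [shift] alone would denote ZArith's [Zpower.shift]. *)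
Lemma in_edge_shift_shift (V E : finType) (s t : E -> V) x :
  in_edge_shift s t x -> in_edge_shift s t (Defs.shift x).
Proof. by move=> hx k; exact: hx. Qed.

Lemma iter_shift (A : Type) n (x : Z -> A) k :
  iter n (@Defs.shift A) x k = x (k + Z.of_nat n)%Z.
Proof.
elim: n k => [|n IH] k /=; first by rewrite Z.add_0_r.
by rewrite /Defs.shift IH; congr x; lia.
Qed.

Section ShiftInvariant.
Variables (A B : Type) (X : (Z -> A) -> Prop).
Hypothesis shift_closed : forall x, X x -> X (Defs.shift x).

Lemma iter_shift_closed n x : X x -> X (iter n (@Defs.shift A) x).
Proof. by move=> hx; elim: n => //= n; exact: shift_closed. Qed.

Lemma iter_shift_commute (f : (Z -> A) -> Z -> B) :
  (forall x, X x -> f (Defs.shift x) = Defs.shift (f x)) ->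
  forall n x, X x -> f (iter n (@Defs.shift A) x) = iter n (@Defs.shift B) (f x).
Proof.
move=> fsh; elim=> // n IH x hx /=.
by rewrite fsh ?IH //; exact: iter_shift_closed.
Qed.

Lemma conjugacy_sym (Y : (Z -> B) -> Prop) f : conjugacy X Y f ->
  exists g, conjugacy Y X g /\ forall y, Y y -> f (g y) = y.
Proof.
move=> [fXY [[g [gYX [gf [fg [cf cg]]]]] fsh]].
exists g; split=> //; split=> //; split; first by exists f.
move=> y hy; rewrite -{1}(fg y hy) -fsh ?gf //; last exact: gYX.
by apply: shift_closed; exact: gYX.
Qed.

End ShiftInvariant.

Lemma conjugacy_maps_terminal (V E V' E' : finType) (s t : E -> V)
    (s' t' : E' -> V') (C : {set V}) (C' : {set V'}) (f : (Z -> E) -> Z -> E') :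
  no_sink_source s t -> no_sink_source s' t' ->
  is_terminal s t C -> (forall D, is_terminal s t D -> D = C) ->
  is_terminal s' t' C' ->
  conjugacy (in_edge_shift s t) (in_edge_shift s' t') f ->
  forall x, in_edge_shift_on s t C x -> in_edge_shift_on s' t' C' (f x).
Proof.
move=> ns ns' tC uC tC' [fX [[g [gY [_ [fg [cf _]]]]] fsh]] x xC.
have /in_edge_shift_onP[hx _] := xC.
apply/in_edge_shift_onP; split=> [|i]; first exact: fX.
have [c' c'C'] : exists c', c' \in C'.
  by case: tC' => [[c [rc ->]] _]; exists c; rewrite inE rc reach_refl.
have [[e' se'] _] := ns' c'.
have [z hz z0] := in_edge_shift_through ns' e'.
have [m1 hm1] := cf (g z) (gY z hz) 0.
have [m2 hm2] := cf x hx (Z.abs_nat i).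
have [p [d [hp pw px hd]]] := splice_into_terminal ns
  (Z.of_nat m1) (- (Z.of_nat m2 + Z.abs i)) tC uC (gY z hz) xC.
have fp0 : f p 0%Z = z 0%Z.
  rewrite -(fg z hz); apply: (hm1 p hp) => [k hk|]; last lia.
  by apply: pw; lia.
have [n dn] : exists n, d = Z.of_nat n by exists (Z.to_nat d); lia.
have shX := @in_edge_shift_shift _ _ s t.
have fpi : f p (i + d)%Z = f x i.
  rewrite dn -iter_shift -(iter_shift_commute shX fsh n hp).
  apply: (hm2 _ (iter_shift_closed shX n hp)) => [k hk|]; last lia.
  by rewrite iter_shift -dn; apply: px; lia.
apply: (terminal_closed ns' tC' c'C').
rewrite -se' -z0 -fp0 -fpi; apply: in_edge_shift_reach (fX p hp) _; lia.
Qed.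

Theorem lemma2p23
  (V E : finType) (s t : E -> V) (V' E' : finType) (s' t' : E' -> V')
  (C : {set V}) (C' : {set V'}) (chi : (Z -> E) -> (Z -> E')) :
  no_sink_source s t -> no_sink_source s' t' ->
  is_terminal s t C -> (forall D, is_terminal s t D -> D = C) ->
  is_terminal s' t' C' -> (forall D, is_terminal s' t' D -> D = C') ->
  conjugacy (in_edge_shift s t) (in_edge_shift s' t') chi ->
  (forall x, in_edge_shift_on s t C x -> in_edge_shift_on s' t' C' (chi x)) /\
  (forall y, in_edge_shift_on s' t' C' y ->
     exists x, in_edge_shift_on s t C x /\ chi x = y).
Proof.
move=> ns ns' tC uC tC' uC' conj.
split; first exact: conjugacy_maps_terminal conj.
have [g [conj' chi_g]] := conjugacy_sym (@in_edge_shift_shift _ _ s t) conj.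
move=> y yC'; exists (g y); split.
  exact: conjugacy_maps_terminal ns' ns tC' uC' tC conj' y yC'.
by apply: chi_g; case/in_edge_shift_onP: yC'.
Qed.
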